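(* Let $A,B\in M_n(\mathbb{R}_+)$ be nilpotent such that both $A$ and $B$ annihilate $AB$ and $BA$, i.e. $A(AB)=A(BA)=B(AB)=B(BA)=0$. Then $A$ and $B$ are simultaneously triangularizable.
   Context: Max algebra: $\mathbb{R}_+$ the nonnegative reals with $a\oplus b=\max\{a,b\}$ and ordinary multiplication; for $A,B\in M_n(\mathbb{R}_+)$, $(AB)_{ij}=\max_k a_{ik}b_{kj}$. A matrix is nilpotent if some power (max-product) is $0$. $GL_n(\mathbb{R}_+)$ is the set of matrices invertible under this product (the generalized permutation matrices). $A,B$ are simultaneously triangularizable if there is one $P\in GL_n(\mathbb{R}_+)$ with both $P^{-1}AP$ and $P^{-1}BP$ upper triangular. *)

From HB Require Import structures.
From mathcomp Require Import all_boot all_order all_algebra.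
From mathcomp Require Import reals.
Set Implicit Arguments. Unset Strict Implicit. Unset Printing Implicit Defensive.
Import Order.TTheory GRing.Theory Num.Theory.
Local Open Scope ring_scope.

Section MaxAlgebra.
Variable R : realType.

Definition nonneg_mx n (A : 'M[R]_n) : Prop := forall i j, 0 <= A i j.

(* Max-product: (AB)_{ij} = max_k a_{ik} b_{kj}; for nonnegative entries the
   empty max is 0, the zero of the max algebra. *)
Definition maxmul n (A B : 'M[R]_n) : 'M[R]_n :=
  \matrix_(i, j) \big[Num.max/0]_(k < n) (A i k * B k j).

Definition maxid n : 'M[R]_n := \matrix_(i, j) (if i == j then 1 else 0).

Fixpoint maxpow n (A : 'M[R]_n) (k : nat) : 'M[R]_n :=
  match k with
  | O => maxid n
  | S k' => maxmul A (maxpow A k')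
  end.

Definition max_nilpotent n (A : 'M[R]_n) : Prop :=
  exists k : nat, maxpow A k = 0.

Definition max_inverse n (P Q : 'M[R]_n) : Prop :=
  nonneg_mx P /\ nonneg_mx Q /\ maxmul P Q = maxid n /\ maxmul Q P = maxid n.

Definition upper_triangular n (A : 'M[R]_n) : Prop :=
  forall i j : 'I_n, (j < i)%N -> A i j = 0.

Definition simult_triangularizable n (A B : 'M[R]_n) : Prop :=
  exists P Q : 'M[R]_n, max_inverse P Q /\
    upper_triangular (maxmul (maxmul Q A) P) /\
    upper_triangular (maxmul (maxmul Q B) P).

End MaxAlgebra.

From mathcomp Require Import all_boot all_order all_algebra reals.
From mathcomp Require Import fingroup perm zify.
Import Order.TTheory GRing.Theory Num.Theory.
Local Open Scope ring_scope.

Set Implicit Arguments. Unset Strict Implicit. Unset Printing Implicit Defensive.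

(* Let e be the union of the supports of A and B, a relation on indices.  The
   annihilation conditions say that an A-step followed by a B-step (or a B-step
   followed by an A-step) can never be preceded by a further step.  Hence after
   its first step an e-walk stays inside the support of A or of B, and
   nilpotency bounds its length.  So e is acyclic: numbering the indices by
   decreasing length of the longest e-walk starting there gives a permutation s
   with e k l -> s k < s l, and conjugating by the permutation matrix of s makes
   both A and B upper triangular. *)

Section TopologicalOrder.
Variables (T : finType) (e : rel T) (N : nat).
Hypothesis path_size_bounded : forall x p, path e x p -> (size p <= N)%N.

Definition height (x : T) : nat :=
  (\max_(m < N.+1 | [exists p : m.-tuple T, path e x p]) m)%N.

Lemma height_edge x y : e x y -> (height y < height x)%N.
Proof.
move=> exy; have y_path0 : [exists p : 0.-tuple T, path e y p].
  by apply/existsP; exists [tuple].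
rewrite /height (bigop.bigmax_eq_arg ord0) //.
case: arg_maxnP => // m /existsP[p ep] _.
have ltm : (m.+1 < N.+1)%N.
  rewrite ltnS -(size_tuple p) -/(size (y :: p)).
  by apply: (path_size_bounded (x := x)); rewrite /= exy.
apply: (leq_bigmax_cond (Ordinal ltm)).
by apply/existsP; exists (cons_tuple y p) => /=; rewrite exy.
Qed.

End TopologicalOrder.

Lemma antitone_ranking (T : finType) (f : T -> nat) : injective f ->
  exists t : T -> 'I_#|T|,
    injective t /\ forall x y, (f x < f y)%N -> (t y < t x)%N.
Proof.
move=> f_inj.
have above_lt x : (#|[set y | (f x < f y)%N]| < #|T|)%N.
  rewrite -cardsT proper_card // properT.
  by apply/eqP => /setP/(_ x); rewrite !inE ltnn.
pose t x := Ordinal (above_lt x).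
have t_anti x y : (f x < f y)%N -> (t y < t x)%N.
  move=> fxy; apply: proper_card; apply/properP; split.
    by apply/subsetP => z; rewrite !inE; apply: ltn_trans.
  by exists y; rewrite !inE ?ltnn.
exists t; split=> // x y txy; apply: f_inj.
by case: (ltngtP (f x) (f y)) => // /t_anti; rewrite txy ltnn.
Qed.

Lemma bounded_path_topological_order (T : finType) (e : rel T) N :
  (forall x p, path e x p -> (size p <= N)%N) ->
  exists t : T -> 'I_#|T|, injective t /\ forall x y, e x y -> (t x < t y)%N.
Proof.
move=> bounded; pose c := #|T|.
pose key x := (height e N x * c + enum_rank x)%N.
have key_inj : injective key.
  move=> x y /(congr1 (modn^~ c)); rewrite !modnMDl !modn_small ?ltn_ord //.
  by move/val_inj/enum_rank_inj.
have [t [t_inj t_anti]] := antitone_ranking key_inj.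
exists t; split=> // x y /(height_edge bounded) hyx; apply: t_anti.
have := ltn_ord (enum_rank y); rewrite /key -/c.
have : (height e N y * c + c <= height e N x * c)%N.
  by rewrite addnC -mulSn leq_mul2r hyx orbT.
lia.
Qed.

Lemma bounded_path_perm n (e : rel 'I_n) N :
  (forall x p, path e x p -> (size p <= N)%N) ->
  exists s : 'S_n, forall k l, e k l -> (s k < s l)%N.
Proof.
move=> /bounded_path_topological_order[t [t_inj t_mono]].
pose t' := cast_ord (card_ord n) \o t.
have t'_inj : injective t' by apply: inj_comp t_inj; apply: cast_ord_inj.
by exists (perm t'_inj) => k l ekl; rewrite !permE; apply: t_mono.
Qed.

Lemma path_relU_tail (T : Type) (e1 e2 : rel T) x y z p :
  (forall a b c d, relU e1 e2 a b -> e1 b c -> e2 c d -> False) ->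
  path (relU e1 e2) x [:: y, z & p] -> e1 y z -> path e1 y (z :: p).
Proof.
move=> no_turn; elim: p x y z => [|w p IH] x y z; first by move=> _ /= ->.
move=> e_p e1yz; have /and4P[exy _ /orP[e1zw | e2zw] _] := e_p.
  by rewrite /= e1yz; apply: (IH y) => //; case/andP: e_p.
by case: (no_turn _ _ _ _ exy e1yz e2zw).
Qed.

Section SupportGraph.
Variables (R : realType) (n : nat).
Implicit Types (M X Y Z : 'M[R]_n) (s : 'S_n).

Definition mxsupp M : rel 'I_n := fun i j => 0 < M i j.

Lemma maxmul_ge X Y i k j : X i k * Y k j <= maxmul X Y i j.
Proof. by rewrite mxE; apply: le_bigmax. Qed.

Lemma mxsupp_maxmul X Y i k j :
  mxsupp X i k -> mxsupp Y k j -> mxsupp (maxmul X Y) i j.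
Proof.
by move=> Xik Ykj; apply: lt_le_trans (maxmul_ge _ _ _ k _); apply: mulr_gt0.
Qed.

Lemma maxmul3_eq0 X Y Z a b c d : maxmul X (maxmul Y Z) = 0 ->
  mxsupp X a b -> mxsupp Y b c -> mxsupp Z c d -> False.
Proof.
move=> XYZ0 Xab Ybc Zcd.
have := mxsupp_maxmul Xab (mxsupp_maxmul Ybc Zcd).
by rewrite /mxsupp XYZ0 mxE ltxx.
Qed.

Lemma mxsupp_maxpow X i p :
  path (mxsupp X) i p -> mxsupp (maxpow X (size p)) i (last i p).
Proof.
elim: p i => [|j p IH] i /=; first by rewrite /mxsupp mxE eqxx ltr01.
by case/andP=> Xij /IH; apply: mxsupp_maxmul.
Qed.

Lemma maxpow_eq0_path X k i p :
  maxpow X k = 0 -> path (mxsupp X) i p -> (size p < k)%N.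
Proof.
move=> Xk0 Xp; rewrite ltnNge; apply/negP => le_k.
have := Xp; rewrite -(cat_take_drop k p) cat_path => /andP[/mxsupp_maxpow].
by rewrite size_take_min (minn_idPl le_k) /mxsupp Xk0 mxE ltxx.
Qed.

Lemma maxmul_perm_mxl s M i j :
  nonneg_mx M -> maxmul (perm_mx s) M i j = M (s i) j.
Proof.
move=> M_ge0; rewrite mxE (bigmaxD1 (s i)) // !mxE eqxx mul1r.
rewrite max_l // bigmax_eq_id // => k /andP[_ /negbTE ski].
by rewrite !mxE eq_sym ski mul0r.
Qed.

Lemma maxmul_perm_mxr s M i j :
  nonneg_mx M -> maxmul M (perm_mx s) i j = M i (s^-1%g j).
Proof.
move=> M_ge0; rewrite mxE (bigmaxD1 (s^-1%g j)) // !mxE permKV eqxx mulr1.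
rewrite max_l // bigmax_eq_id // => k /andP[_ kj].
by rewrite !mxE (canF_eq (permK s)) (negbTE kj) mulr0.
Qed.

Lemma nonneg_perm_mx s : nonneg_mx (perm_mx s : 'M[R]_n).
Proof. by move=> i j; rewrite !mxE ler0n. Qed.

Lemma max_inverse_perm_mx s :
  max_inverse (perm_mx s : 'M[R]_n) (perm_mx s^-1%g).
Proof.
do 2 (split; first exact: nonneg_perm_mx).
split; apply/matrixP => i j;
  rewrite (maxmul_perm_mxl _ _ _ (nonneg_perm_mx _)) !mxE ?permK ?permKV;
  by case: eqP.
Qed.

Lemma upper_triangular_perm_conj s M : nonneg_mx M ->
  (forall k l, mxsupp M k l -> (s k <= s l)%N) ->
  upper_triangular (maxmul (maxmul (perm_mx s^-1%g) M) (perm_mx s)).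
Proof.
move=> M_ge0 s_mono i j lt_ji.
rewrite maxmul_perm_mxr => [|k l]; last by rewrite maxmul_perm_mxl.
rewrite maxmul_perm_mxl //; apply/eqP; rewrite eq_le M_ge0 andbT leNgt.
by apply/negP => /s_mono; rewrite !permKV leqNgt lt_ji.
Qed.

Lemma simult_triangularizable_perm s A B : nonneg_mx A -> nonneg_mx B ->
  (forall k l, mxsupp A k l -> (s k <= s l)%N) ->
  (forall k l, mxsupp B k l -> (s k <= s l)%N) ->
  simult_triangularizable A B.
Proof.
move=> A_ge0 B_ge0 sA sB; exists (perm_mx s), (perm_mx s^-1%g).
split; first exact: max_inverse_perm_mx.
by split; apply: upper_triangular_perm_conj.
Qed.

Lemma mxsupp_path_tail X Y k x y z p :
  maxpow X k = 0 -> maxmul X (maxmul X Y) = 0 -> maxmul Y (maxmul X Y) = 0 ->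
  path (relU (mxsupp X) (mxsupp Y)) x [:: y, z & p] -> mxsupp X y z ->
  ((size p).+1 < k)%N.
Proof.
move=> Xk0 XXY YXY e_p Xyz; apply: (maxpow_eq0_path (p := z :: p) Xk0).
apply: path_relU_tail e_p Xyz => a b c d /orP[Xab | Yab].
  exact: maxmul3_eq0 XXY Xab.
exact: maxmul3_eq0 YXY Yab.
Qed.

Lemma mxsupp_path_bounded A B kA kB :
  maxpow A kA = 0 -> maxpow B kB = 0 ->
  maxmul A (maxmul A B) = 0 -> maxmul A (maxmul B A) = 0 ->
  maxmul B (maxmul A B) = 0 -> maxmul B (maxmul B A) = 0 ->
  forall x p, path (relU (mxsupp A) (mxsupp B)) x p ->
    (size p <= (maxn kA kB).+1)%N.
Proof.
move=> Ak0 Bk0 AAB ABA BAB BBA x.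
case => [|y [|z p]] //= e_p; have /andP[_ /andP[/orP[Ayz | Byz] _]] := e_p.
  by have := mxsupp_path_tail Ak0 AAB BAB e_p Ayz; lia.
have e_p' : path (relU (mxsupp B) (mxsupp A)) x [:: y, z & p].
  rewrite (eq_path (e' := relU (mxsupp A) (mxsupp B))) //.
  by move=> a b /=; rewrite orbC.
by have := mxsupp_path_tail Bk0 BBA ABA e_p' Byz; lia.
Qed.

End SupportGraph.

Theorem corollary3p10 (R : realType) (n : nat) (A B : 'M[R]_n) :
  nonneg_mx A -> nonneg_mx B ->
  max_nilpotent A -> max_nilpotent B ->
  maxmul A (maxmul A B) = 0 -> maxmul A (maxmul B A) = 0 ->
  maxmul B (maxmul A B) = 0 -> maxmul B (maxmul B A) = 0 ->
  simult_triangularizable A B.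
Proof.
move=> A_ge0 B_ge0 [kA Ak0] [kB Bk0] AAB ABA BAB BBA.
have bounded := mxsupp_path_bounded Ak0 Bk0 AAB ABA BAB BBA.
have [s s_mono] := bounded_path_perm bounded.
apply: (simult_triangularizable_perm (s := s)) => // k l supp_kl;
  by apply/ltnW/s_mono; rewrite /= supp_kl ?orbT.
Qed.
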